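(* Every sector renormalization of a rotation $\mathbb{L}_\theta$ of the closed unit disk is an iteration (composition) of prime renormalizations.
   Context: For $\theta\in\mathbb{R}/\mathbb{Z}$ let $\mathbb{L}_\theta:\overline{\mathbb{D}}\to\overline{\mathbb{D}}$, $z\mapsto e^{2\pi i\theta}z$. Sectors are closed sectors of $\overline{\mathbb{D}}$ with vertex $0$ bounded by two internal rays. A sector renormalization $\mathcal{R}$ of $\mathbb{L}_\theta$ consists of: a renormalization sector $\mathbb{X}$ written as a union of two subsectors $\mathbb{X}_-\cup\mathbb{X}_+$ with common boundary ray, normalized so that $1\in\mathbb{X}_-\cap\mathbb{X}_+$ (one of $\mathbb{X}_\pm$ may degenerate to a ray, but not both); a pair of iterates $(\mathbb{L}_\theta^{\mathbf a}|_{\mathbb{X}_-},\mathbb{L}_\theta^{\mathbf b}|_{\mathbb{X}_+})$ (the pre-renormalization) realizing the first return of points of $\mathbb{X}_-\cup\mathbb{X}_+$ back to $\mathbb{X}$; and the gluing map $\psi:\mathbb{X}\to\overline{\mathbb{D}}$, $z\mapsto z^{1/\omega}$ (with $\omega$ the angle of $\mathbb{X}$ at $0$ in full turns, argument measured from a boundary ray of $\mathbb{X}$), which projects the pair to a new rotation $\mathbb{L}_\mu$; one writes $\mathcal{R}\mathbb{L}_\theta=\mathbb{L}_\mu$. The composition $\mathcal{R}_2\circ\mathcal{R}_1$ of sector renormalizations $\mathcal{R}_1\mathbb{L}_\theta=\mathbb{L}_\mu$, $\mathcal{R}_2\mathbb{L}_\mu=\mathbb{L}_\nu$ is the sector renormalization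 of $\mathbb{L}_\theta$ obtained by lifting the pre-renormalization of $\mathcal{R}_2$ via $\psi_1$ to the dynamical plane of $\mathbb{L}_\theta$. The prime renormalization is the following sector renormalization (for $\theta\ne0$): let $\mathbb{Y}$ be the smallest closed sector bounded by an internal ray $\mathbb{I}$ and $\mathbb{L}_\theta(\mathbb{I})$, $\mathbb{Y}_-=\mathbb{L}_\theta^{-1}(\mathbb{Y})$, $\mathbb{Y}_+=\overline{\mathbb{D}\setminus(\mathbb{Y}\cup\mathbb{Y}_-)}$; the pre-renormalization is $(\mathbb{L}^2_\theta|_{\mathbb{Y}_-},\mathbb{L}_\theta|_{\mathbb{Y}_+})$ on $\mathbb{Y}_-\cup\mathbb{Y}_+$, with return times summing to $3$. *)

(* angles are real numbers measured in full turns (R/Z is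
   represented by R with equality modulo 1).  The rotation L_theta of the
   closed unit disk acts on internal rays (arguments) by x |-> x + theta;
   everything in the paper's definitions is radial, so sectors and their
   dynamics are described by arcs of arguments. *)
From Stdlib Require Import Reals ZArith.
Open Scope R_scope.

Definition eqm1 (x y : R) : Prop := exists k : Z, x - y = IZR k.

(* the closed sector of opening w (in turns) starting at the ray of argument s
   and going counterclockwise; w = 0 is the single ray s *)
Definition in_arc (s w x : R) : Prop :=
  exists k : Z, s <= x + IZR k <= s + w.

Definition in_open_arc (s w x : R) : Prop :=
  exists k : Z, s < x + IZR k < s + w.

(* "points" of a subsector for the first-return requirement: its interior,
   or the ray itself when the subsector degenerates to a ray *)
Definition rel_int (s w x : R) : Prop :=
  (w = 0 /\ eqm1 x s) \/ (0 < w /\ in_open_arc s w x).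

Definition Lit (theta : R) (n : nat) (x : R) : R := x + INR n * theta.

(* A (normalized) sector renormalization datum: the common ray of
   X_- and X_+ is the ray through 1 (argument 0);
   X_- = closed sector from -sr_p to 0, X_+ = closed sector from 0 to sr_q,
   X = X_- \cup X_+ (from -sr_p to sr_q), pre-renormalization
   (L^{sr_a} on X_-, L^{sr_b} on X_+). *)
Record SR := mkSR { sr_p : R; sr_q : R; sr_a : nat; sr_b : nat }.

Definition sr_X (S : SR) (x : R) : Prop := in_arc (- sr_p S) (sr_p S + sr_q S) x.

(* gluing map psi : X -> closed disk, z |-> z^{1/omega}, argument measured from
   the boundary ray -sr_p of X; psi_rel S x s  means  psi(x) = s (mod 1). *)
Definition psi_rel (S : SR) (x s : R) : Prop :=
  exists k : Z, - sr_p S <= x + IZR k <= sr_q S /\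
                s = (x + IZR k + sr_p S) / (sr_p S + sr_q S).

Definition first_return (theta : R) (X : R -> Prop) (n : nat) (x : R) : Prop :=
  X (Lit theta n x) /\ forall j : nat, (1 <= j < n)%nat -> ~ X (Lit theta j x).

Definition sector_renormalization (theta : R) (S : SR) (mu : R) : Prop :=
  let p := sr_p S in let q := sr_q S in
  let a := sr_a S in let b := sr_b S in
  0 <= p /\ 0 <= q /\ 0 < p + q /\ p + q < 1 /\
  (1 <= a)%nat /\ (1 <= b)%nat /\
  a <> b /\
  (forall x, rel_int (- p) p x -> first_return theta (sr_X S) a x) /\
  (forall x, rel_int 0 q x -> first_return theta (sr_X S) b x) /\
  (forall x, in_arc (- p) p x -> sr_X S (Lit theta a x)) /\
  (forall x, in_arc 0 q x -> sr_X S (Lit theta b x)) /\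
  (forall x s s', in_arc (- p) p x -> psi_rel S x s ->
      psi_rel S (Lit theta a x) s' -> eqm1 s' (s + mu)) /\
  (forall x s s', in_arc 0 q x -> psi_rel S x s ->
      psi_rel S (Lit theta b x) s' -> eqm1 s' (s + mu)).

Definition same_arc (s w : R) (A : R * R) : Prop :=
  forall x, in_arc s w x <-> in_arc (fst A) (snd A) x.

(* The prime construction for an internal ray I of argument iota,
   with t = theta mod 1 in (0,1):
   Y = smallest closed sector bounded by I and L(I):
       [iota, iota+t] if t <= 1/2,   [iota+t, iota+1] if t >= 1/2;
   Ym = L^{-1}(Y);  Yp = closure of the complement of Y \cup Ym
   (the ray iota + 1/2 when t = 1/2).  Arcs are (start, opening). *)
Definition prime_config (theta iota : R) (Ym Yp : R * R) : Prop :=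
  let t := frac_part theta in
  0 < t /\
  ((t <= 1/2 /\ Ym = (iota - t, t) /\ Yp = (iota + t, 1 - 2 * t))
   \/ (1/2 <= t /\ Ym = (iota, 1 - t) /\ Yp = (iota + 1 - t, 2 * t - 1))).

(* S is the prime renormalization of L_theta (R L_theta = L_mu):
   pre-renormalization (L^2 on Ym, L on Yp), renormalization sector Ym \cup Yp,
   normalized (rotated) so that the common ray is the ray through 1. *)
Definition is_prime (theta : R) (S : SR) (mu : R) : Prop :=
  sector_renormalization theta S mu /\
  exists iota Ym Yp c,
    prime_config theta iota Ym Yp /\
    ((same_arc (c - sr_p S) (sr_p S) Yp /\ same_arc c (sr_q S) Ym /\
      sr_a S = 1%nat /\ sr_b S = 2%nat)
     \/
     (same_arc (c - sr_p S) (sr_p S) Ym /\ same_arc c (sr_q S) Yp /\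
      sr_a S = 2%nat /\ sr_b S = 1%nat)).

(* R1 = S1 renormalizes L_theta to L_mu1, R2 = S2
   renormalizes L_mu1 to L_mu2.  psi1^{-1} sends s in [0,1] to
   -p1 + omega1 * s.  R2 (defined up to rotation, which commutes with L_mu1)
   is placed with its common ray at argument r, with its sector inside the
   image of psi1 (i.e. not crossing the glued boundary rays), and its
   pre-renormalization is lifted via psi1; S is the resulting sector
   renormalization of L_theta, renormalized so that its common ray is at 1. *)
Definition compose (theta : R) (S1 : SR) (mu1 : R) (S2 : SR) (mu2 : R)
    (S : SR) : Prop :=
  let p1 := sr_p S1 in let w1 := sr_p S1 + sr_q S1 in
  let lift := fun s => - p1 + w1 * s in
  sector_renormalization theta S1 mu1 /\
  sector_renormalization mu1 S2 mu2 /\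
  sector_renormalization theta S mu2 /\
  exists r : R,
    sr_p S2 <= r <= 1 - sr_q S2 /\
    sr_p S = w1 * sr_p S2 /\ sr_q S = w1 * sr_q S2 /\
    (forall t, - sr_p S <= t <= 0 ->
       exists s', 0 <= s' <= 1 /\
         eqm1 s' (Lit mu1 (sr_a S2) (r + t / w1)) /\
         eqm1 (Lit theta (sr_a S) (lift r + t)) (lift s')) /\
    (forall t, 0 <= t <= sr_q S ->
       exists s', 0 <= s' <= 1 /\
         eqm1 s' (Lit mu1 (sr_b S2) (r + t / w1)) /\
         eqm1 (Lit theta (sr_b S) (lift r + t)) (lift s')).

Inductive prime_iteration (theta : R) : SR -> R -> Prop :=
| pi_one : forall S mu, is_prime theta S mu -> prime_iteration theta S mu
| pi_step : forall S1 mu1 S2 mu2 S,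
    prime_iteration theta S1 mu1 ->
    is_prime mu1 S2 mu2 ->
    compose theta S1 mu1 S2 mu2 S ->
    prime_iteration theta S mu2.

(* A sector renormalization of L_theta with subsectors of openings p, q and return times
   a, b is pure combinatorics: the gluing condition forces L^a to translate X_- by q and L^b
   to translate X_+ by -p, so the two subsectors are exchanged and the renormalized rotation
   number is q/(p+q).  If a < b and (a, b) <> (1, 2), the first-return property forces
   p + 2q < 1, and (p + q, q, a, b - a) is again a sector renormalization of L_theta; the
   original one is its composition with the prime renormalization of the rotation by
   q/(p + 2q), whose return times are (1, 2).  The case b < a is the mirror image, and
   induction on a + b ends at the prime cases (1, 2) and (2, 1). *)

From Stdlib Require Import Reals Lra Lia.
Open Scope R_scope.
Set Implicit Arguments.

(** * Arcs of arguments modulo 1 *)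

Lemma eqm1_refl x : eqm1 x x.
Proof. exists 0%Z; simpl; lra. Qed.

Lemma eqm1_sym x y : eqm1 x y -> eqm1 y x.
Proof. intros [k Hk]; exists (- k)%Z; rewrite opp_IZR; lra. Qed.

Lemma eqm1_window_eq s w x y : w < 1 -> s <= x <= s + w -> s <= y <= s + w ->
  eqm1 x y -> x = y.
Proof.
  intros Hw Hx Hy [k Hk].
  assert (k = 0%Z) as -> by (apply one_IZR_lt1; lra).
  simpl in Hk; lra.
Qed.

Lemma in_arc_intro s w x z : s <= z <= s + w -> eqm1 x z -> in_arc s w x.
Proof. intros Hz [m Hm]; exists (- m)%Z; rewrite opp_IZR; lra. Qed.

Lemma in_arc_elim s w x : in_arc s w x -> exists z, s <= z <= s + w /\ eqm1 x z.
Proof.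
  intros [k Hk]; exists (x + IZR k); split; [lra|].
  exists (- k)%Z; rewrite opp_IZR; lra.
Qed.

Lemma not_in_arc s w x z : s + w < z < s + 1 -> eqm1 x z -> ~ in_arc s w x.
Proof.
  intros Hz [m Hm] [k Hk].
  assert (Hneg : (m + k < 0)%Z) by (apply lt_IZR; rewrite plus_IZR; simpl; lra).
  assert (Hle : IZR (m + k) <= -1) by (apply IZR_le; lia).
  rewrite plus_IZR in Hle; lra.
Qed.

Lemma rel_int_intro s w x z : 0 < w -> s < z < s + w -> eqm1 x z -> rel_int s w x.
Proof. intros Hw Hz [m Hm]; right; split; [lra|]; exists (- m)%Z; rewrite opp_IZR; lra. Qed.

Lemma rel_int_elim s w x : 0 < w -> rel_int s w x -> exists z, s < z < s + w /\ eqm1 x z.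
Proof.
  intros Hw [[H0 _]|[_ [k Hk]]]; [lra|].
  exists (x + IZR k); split; [lra|]; exists (- k)%Z; rewrite opp_IZR; lra.
Qed.

Lemma rel_int_in_arc s w x : rel_int s w x -> in_arc s w x.
Proof.
  intros [[H0 [k Hk]]|[_ [k Hk]]].
  - exists (- k)%Z; rewrite opp_IZR; lra.
  - exists k; lra.
Qed.

Lemma rel_int_mid s w : 0 <= w -> rel_int s w (s + w / 2).
Proof.
  intros Hw; destruct (Req_dec w 0) as [->|Hn].
  - left; split; [reflexivity|]; exists 0%Z; simpl; lra.
  - right; split; [lra|]; exists 0%Z; simpl; lra.
Qed.

Lemma in_arc_opp s w x : in_arc s w x -> in_arc (- (s + w)) w (- x).
Proof. intros [k Hk]; exists (- k)%Z; rewrite opp_IZR; lra. Qed.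

Lemma rel_int_opp s w x : rel_int s w x -> rel_int (- (s + w)) w (- x).
Proof.
  intros [[H0 [k Hk]]|[Hw [k Hk]]]; [left | right]; (split; [auto|]);
    exists (- k)%Z; rewrite opp_IZR; lra.
Qed.

Lemma exists_lift_in x s : exists k : Z, s <= x + IZR k < s + 1.
Proof.
  destruct (base_Int_part (x - s)) as [H1 H2].
  exists (- Int_part (x - s))%Z; rewrite opp_IZR; lra.
Qed.

Lemma frac_part_eqm1 x t : eqm1 x t -> 0 <= t < 1 -> frac_part x = t.
Proof.
  intros [n Hn] Ht; symmetry.
  apply (proj2 (Int_part_frac_part_spec x n t Ht ltac:(lra))).
Qed.

Lemma interval_in_arc_lift s l c S W : 0 <= l -> W < 1 ->
  (forall x, s <= x <= s + l -> in_arc S W (x + c)) ->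
  exists k : Z, S <= s + c + IZR k /\ s + l + c + IZR k <= S + W.
Proof.
  intros Hl HW Hin.
  destruct (Hin s) as [k Hk]; [lra|]; exists k; split; [lra|].
  destruct (Rle_dec (s + l + c + IZR k) (S + W)) as [|Hgt]; [assumption|exfalso].
  pose proof (Rmin_l (s + l + c + IZR k) (S + W + (1 - W) / 2)).
  pose proof (Rmin_r (s + l + c + IZR k) (S + W + (1 - W) / 2)).
  assert (S + W < Rmin (s + l + c + IZR k) (S + W + (1 - W) / 2))
    by (apply Rmin_glb_lt; lra).
  set (y := Rmin (s + l + c + IZR k) (S + W + (1 - W) / 2)) in *.
  apply (@not_in_arc S W (y - IZR k) y); [lra | |].
  - exists (- k)%Z; rewrite opp_IZR; lra.
  - replace (y - IZR k) with (y - c - IZR k + c) by ring; apply Hin; lra.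
Qed.

Lemma interval_avoiding_arc_lift s l c S W : 0 < l -> 0 <= W < 1 ->
  (forall x, s < x < s + l -> ~ in_arc S W (x + c)) ->
  exists k : Z, S + W <= s + c + IZR k /\ s + l + c + IZR k <= S + 1.
Proof.
  intros Hl HW Hout.
  destruct (exists_lift_in (s + c) (S + W)) as [k Hk]; exists k; split; [lra|].
  destruct (Rle_dec (s + l + c + IZR k) (S + 1)) as [|Hgt]; [assumption|exfalso].
  remember (s + c + IZR k) as z eqn:Hz.
  pose proof (Rmax_l z (S + 1)); pose proof (Rmax_r z (S + 1)).
  pose proof (Rmin_l (z + l) (S + 1 + W)); pose proof (Rmin_r (z + l) (S + 1 + W)).
  assert (Rmax z (S + 1) < z + l) by (apply Rmax_lub_lt; lra).
  assert (z < Rmin (z + l) (S + 1 + W)) by (apply Rmin_glb_lt; lra).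
  assert (Rmax z (S + 1) <= S + 1 + W) by (apply Rmax_lub; lra).
  assert (S + 1 <= Rmin (z + l) (S + 1 + W)) by (apply Rmin_glb; lra).
  set (y := (Rmax z (S + 1) + Rmin (z + l) (S + 1 + W)) / 2).
  assert (z < y < z + l /\ S + 1 <= y <= S + 1 + W) by (unfold y; lra).
  apply (Hout (y - c - IZR k)); [lra|].
  apply (in_arc_intro (z := y - 1)); [lra|].
  exists (1 - k)%Z; rewrite minus_IZR; simpl; lra.
Qed.

Lemma perturb_into A B C D x y e : A < x < B -> C <= y <= D -> C < D ->
  exists eps, A < x + eps < B /\ C < y + eps < D /\ x + eps <> e.
Proof.
  intros Hx Hy HCD.
  pose proof (Rmin_l (Rmin (B - x) (x - A)) ((D - C) / 2)).
  pose proof (Rmin_r (Rmin (B - x) (x - A)) ((D - C) / 2)).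
  pose proof (Rmin_l (B - x) (x - A)); pose proof (Rmin_r (B - x) (x - A)).
  assert (0 < Rmin (Rmin (B - x) (x - A)) ((D - C) / 2))
    by (repeat apply Rmin_glb_lt; lra).
  set (d := Rmin (Rmin (B - x) (x - A)) ((D - C) / 2)) in *.
  destruct (Rle_dec y ((C + D) / 2));
    [destruct (Req_dec (x + d / 2) e) | destruct (Req_dec (x - d / 2) e)];
    [exists (d / 3) | exists (d / 2) | exists (- (d / 3)) | exists (- (d / 2))];
    repeat split; lra.
Qed.

Lemma in_arc_shift s w x c d : in_arc s w x -> eqm1 c d -> in_arc (s + d) w (x + c).
Proof. intros [k Hk] [m Hm]; exists (k - m)%Z; rewrite minus_IZR; lra. Qed.

Lemma in_arc_sub s w s' w' x : s' <= s -> s + w <= s' + w' -> in_arc s w x -> in_arc s' w' x.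
Proof. intros H1 H2 [k Hk]; exists k; lra. Qed.

(** * The combinatorics of a sector renormalization *)

Lemma psi_rel_intro S z : - sr_p S <= z <= sr_q S ->
  psi_rel S z ((z + sr_p S) / (sr_p S + sr_q S)).
Proof. intros Hz; exists 0%Z; simpl; split; [lra | f_equal; ring]. Qed.

Lemma psi_rel_eq S x z s : sr_p S + sr_q S < 1 -> - sr_p S <= z <= sr_q S ->
  eqm1 x z -> psi_rel S x s -> s = (z + sr_p S) / (sr_p S + sr_q S).
Proof.
  intros Hw Hz Exz [k [Hk ->]].
  replace (x + IZR k) with z; [reflexivity|].
  apply (@eqm1_window_eq (- sr_p S) (sr_p S + sr_q S)); [lra | lra | lra |].
  destruct Exz as [m Hm]; exists (- m - k)%Z; rewrite minus_IZR, opp_IZR; lra.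
Qed.

Lemma psi_rel_shift S x c d z s0 s1 : 0 < sr_p S + sr_q S < 1 ->
  - sr_p S <= z <= sr_q S -> - sr_p S <= z + d <= sr_q S ->
  eqm1 x z -> eqm1 c d -> psi_rel S x s0 -> psi_rel S (x + c) s1 ->
  s1 = s0 + d / (sr_p S + sr_q S).
Proof.
  intros [Hw0 Hw] Hz Hzd Exz Ecd H0 H1.
  rewrite (psi_rel_eq Hw Hz Exz H0).
  assert (Exzd : eqm1 (x + c) (z + d)).
  { destruct Exz as [m Hm], Ecd as [n Hn]; exists (m + n)%Z; rewrite plus_IZR; lra. }
  rewrite (psi_rel_eq Hw Hzd Exzd H1).
  field; lra.
Qed.

Lemma sr_translation th mu S n s l :
  0 < sr_p S + sr_q S < 1 -> 0 <= l -> - sr_p S <= s -> s + l <= sr_q S ->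
  (forall x, in_arc s l x -> sr_X S (Lit th n x)) ->
  (forall x s0 s1, in_arc s l x -> psi_rel S x s0 -> psi_rel S (Lit th n x) s1 ->
     eqm1 s1 (s0 + mu)) ->
  exists d, - sr_p S <= s + d /\ s + l + d <= sr_q S /\
    eqm1 (INR n * th) d /\ eqm1 (d / (sr_p S + sr_q S)) mu.
Proof.
  intros Hw Hl Hs Hsl Hmap Hglue.
  destruct (@interval_in_arc_lift s l (INR n * th) (- sr_p S) (sr_p S + sr_q S))
    as [k Hk]; [lra | lra | |].
  { intros x Hx; apply Hmap; exists 0%Z; simpl; lra. }
  set (d := INR n * th + IZR k).
  exists d; split; [unfold d; lra|]; split; [unfold d; lra|]; split.
  { exists (- k)%Z; rewrite opp_IZR; unfold d; ring. }
  assert (Hs0 : in_arc s l s) by (exists 0%Z; simpl; lra).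
  assert (Hpsi : psi_rel S (Lit th n s) ((s + d + sr_p S) / (sr_p S + sr_q S))).
  { exists k; unfold Lit, d; split; [lra | f_equal; ring]. }
  destruct (Hglue s _ _ Hs0 (@psi_rel_intro S s ltac:(lra)) Hpsi) as [m Hm].
  exists m; rewrite <- Hm; field; lra.
Qed.

Lemma translations_exchange p q d1 d2 mu : 0 < p + q ->
  0 <= d1 <= q -> - p <= d2 <= 0 ->
  eqm1 (d1 / (p + q)) mu -> eqm1 (d2 / (p + q)) mu ->
  (d1 = q /\ d2 = - p) \/ (d1 = 0 /\ d2 = 0).
Proof.
  intros Hw Hd1 Hd2 [m1 Hm1] [m2 Hm2].
  assert (E : d1 - d2 = IZR (m1 - m2) * (p + q)).
  { rewrite minus_IZR; replace d1 with (d1 / (p + q) * (p + q)) by (field; lra).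
    replace d2 with (d2 / (p + q) * (p + q)) at 1 by (field; lra). nra. }
  assert (Hn : 0 <= IZR (m1 - m2) <= 1) by (split; nra).
  destruct Hn as [Hn0 Hn1]; apply le_IZR in Hn0; apply le_IZR in Hn1.
  assert (m1 - m2 = 0 \/ m1 - m2 = 1)%Z as [N|N] by lia;
    rewrite N in E; simpl in E; [right | left]; lra.
Qed.

(* [X_-] and [X_+] are the arcs of arguments [-p, 0] and [0, q]; [L^a] and [L^b] translate
   them by [q] and [-p], i.e. exchange them inside [X = [-p, q]]. *)
Record renorm_data (th p q : R) (a b : nat) : Prop := RenormData {
  rd_p_ge0 : 0 <= p;
  rd_q_ge0 : 0 <= q;
  rd_width_gt0 : 0 < p + q;
  rd_width_lt1 : p + q < 1;
  rd_a_ge1 : (1 <= a)%nat;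
  rd_b_ge1 : (1 <= b)%nat;
  rd_a_neq_b : a <> b;
  rd_shift_a : eqm1 (INR a * th) q;
  rd_shift_b : eqm1 (INR b * th) (- p);
  rd_return_m : forall x, rel_int (- p) p x ->
    forall j, (1 <= j < a)%nat -> ~ in_arc (- p) (p + q) (x + INR j * th);
  rd_return_p : forall x, rel_int 0 q x ->
    forall j, (1 <= j < b)%nat -> ~ in_arc (- p) (p + q) (x + INR j * th) }.

Lemma sr_periods_not_both_zero th S mu : sector_renormalization th S mu ->
  eqm1 (INR (sr_a S) * th) 0 -> eqm1 (INR (sr_b S) * th) 0 -> False.
Proof.
  destruct S as [p q a b].
  intros (Hp & Hq & _ & _ & Ha & Hb & Hab & Fm & Fp & _) Ea Eb; simpl in *.
  destruct (Nat.lt_gt_cases a b) as [[L|L] _]; [exact Hab | |].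
  - apply (proj2 (Fp _ (rel_int_mid 0 Hq)) a); [lia|].
    apply (in_arc_intro (z := q / 2)); [simpl; lra|].
    destruct Ea as [k Hk]; exists k; unfold Lit; lra.
  - apply (proj2 (Fm _ (rel_int_mid (- p) Hp)) b); [lia|].
    apply (in_arc_intro (z := - p + p / 2)); [simpl; lra|].
    destruct Eb as [k Hk]; exists k; unfold Lit; lra.
Qed.

Lemma renorm_data_of_sr th mu p q a b :
  sector_renormalization th (mkSR p q a b) mu ->
  renorm_data th p q a b /\ eqm1 mu (q / (p + q)).
Proof.
  intros H; pose proof H as (Hp & Hq & Hw & Hw1 & Ha & Hb & Hab & Fm & Fp & Mm & Mp & Gm & Gp).
  simpl in *.
  destruct (@sr_translation th mu (mkSR p q a b) a (- p) p) as (d1 & Hd1 & Hd1' & Ea & Ga);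
    simpl; try lra; [exact Mm | exact Gm |].
  destruct (@sr_translation th mu (mkSR p q a b) b 0 q) as (d2 & Hd2 & Hd2' & Eb & Gb);
    simpl; try lra; [exact Mp | exact Gp |].
  simpl in *.
  destruct (@translations_exchange p q d1 d2 mu) as [[-> ->]|[-> ->]];
    [lra | lra | lra | assumption | assumption | |].
  - split; [constructor; auto|].
    + intros x Hx; exact (proj2 (Fm x Hx)).
    + intros x Hx; exact (proj2 (Fp x Hx)).
    + exact (eqm1_sym Ga).
  - exfalso; exact (sr_periods_not_both_zero H Ea Eb).
Qed.

Lemma sr_of_renorm_data th mu p q a b :
  renorm_data th p q a b -> eqm1 mu (q / (p + q)) ->
  sector_renormalization th (mkSR p q a b) mu.
Proof.
  intros D Hmu.
  pose proof (rd_p_ge0 D) as Hp; pose proof (rd_q_ge0 D) as Hq.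
  pose proof (rd_width_gt0 D) as Hw0; pose proof (rd_width_lt1 D) as Hw1.
  assert (Mm : forall x, in_arc (- p) p x -> sr_X (mkSR p q a b) (Lit th a x)).
  { intros x Hx; apply (@in_arc_sub (- p + q) p); simpl; [lra | lra |].
    exact (in_arc_shift Hx (rd_shift_a D)). }
  assert (Mp : forall x, in_arc 0 q x -> sr_X (mkSR p q a b) (Lit th b x)).
  { intros x Hx; apply (@in_arc_sub (0 + - p) q); simpl; [lra | lra |].
    exact (in_arc_shift Hx (rd_shift_b D)). }
  assert (Hw : 0 < sr_p (mkSR p q a b) + sr_q (mkSR p q a b) < 1) by (simpl; lra).
  unfold sector_renormalization; simpl.
  do 4 (split; [lra|]); do 3 (split; [apply D|]).
  split; [intros x Hx; split; [apply Mm, rel_int_in_arc, Hx | exact (rd_return_m D Hx)]|].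
  split; [intros x Hx; split; [apply Mp, rel_int_in_arc, Hx | exact (rd_return_p D Hx)]|].
  do 2 (split; [assumption|]); split.
  - intros x s0 s1 Hx H0 H1; destruct (in_arc_elim Hx) as [z [Hz Exz]].
    rewrite (psi_rel_shift (z := z) (d := q) Hw ltac:(simpl; lra) ltac:(simpl; lra)
               Exz (rd_shift_a D) H0 H1); simpl.
    destruct Hmu as [m Hm]; exists (- m)%Z; rewrite opp_IZR; lra.
  - intros x s0 s1 Hx H0 H1; destruct (in_arc_elim Hx) as [z [Hz Exz]].
    rewrite (psi_rel_shift (z := z) (d := - p) Hw ltac:(simpl; lra) ltac:(simpl; lra)
               Exz (rd_shift_b D) H0 H1); simpl.
    destruct Hmu as [m Hm]; exists (- m - 1)%Z; rewrite minus_IZR, opp_IZR.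
    replace (- p / (p + q)) with (q / (p + q) - 1) by (field; lra); simpl; lra.
Qed.

(** * Reducing the return times *)

Lemma renorm_data_opp th p q a b : renorm_data th p q a b -> renorm_data (- th) q p b a.
Proof.
  intros D; pose proof (rd_p_ge0 D); pose proof (rd_q_ge0 D).
  pose proof (rd_width_gt0 D); pose proof (rd_width_lt1 D).
  constructor; try lra; try apply D.
  - intros Hba; exact (rd_a_neq_b D (eq_sym Hba)).
  - destruct (rd_shift_b D) as [m Hm]; exists (- m)%Z; rewrite opp_IZR; lra.
  - destruct (rd_shift_a D) as [m Hm]; exists (- m)%Z; rewrite opp_IZR; lra.
  - intros x Hx j Hj Hin; refine (rd_return_p D (x := - x) _ Hj _).
    + replace 0 with (- (- q + q)) by ring; exact (rel_int_opp Hx).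
    + replace (- p) with (- (- q + (q + p))) by ring; replace (p + q) with (q + p) by ring.
      replace (- x + INR j * th) with (- (x + INR j * - th)) by ring.
      exact (in_arc_opp Hin).
  - intros x Hx j Hj Hin; refine (rd_return_m D (x := - x) _ Hj _).
    + replace (- p) with (- (0 + p)) by ring; exact (rel_int_opp Hx).
    + replace (- p) with (- (- q + (q + p))) by ring; replace (p + q) with (q + p) by ring.
      replace (- x + INR j * th) with (- (x + INR j * - th)) by ring.
      exact (in_arc_opp Hin).
Qed.

Section ReductionLt.

Variables (th p q : R) (a b : nat).
Hypothesis D : renorm_data th p q a b.
Hypothesis Hab : (a < b)%nat.

Lemma renorm_data_q_gt0 : 0 < q.
Proof.
  destruct (Req_dec q 0) as [Hq|Hq]; [exfalso | pose proof (rd_q_ge0 D); lra].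
  refine (rd_return_p D (x := 0) _ (j := a) ltac:(pose proof (rd_a_ge1 D); lia) _).
  - left; split; [exact Hq | apply eqm1_refl].
  - pose proof (rd_p_ge0 D); apply (in_arc_intro (z := 0)); [lra|].
    destruct (rd_shift_a D) as [m Hm]; exists m; lra.
Qed.

Lemma return_p_open x j : 0 < x < q -> (1 <= j < b)%nat ->
  ~ in_arc (- p) (p + q) (x + INR j * th).
Proof.
  intros Hx; apply (rd_return_p D); apply (rel_int_intro (z := x)); [lra | lra | apply eqm1_refl].
Qed.

Lemma renorm_data_width_le : p + q + q <= 1.
Proof.
  pose proof (rd_width_gt0 D); pose proof (rd_width_lt1 D); pose proof (rd_q_ge0 D).
  destruct (@interval_avoiding_arc_lift 0 q (INR a * th) (- p) (p + q)) as [k [K1 K2]];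
    [exact renorm_data_q_gt0 | lra | |].
  { intros x Hx; apply return_p_open; [lra | pose proof (rd_a_ge1 D); lia]. }
  destruct (rd_shift_a D) as [m Hm].
  assert (E : (m + k = 0)%Z) by (apply one_IZR_lt1; rewrite plus_IZR; lra).
  apply (f_equal IZR) in E; rewrite plus_IZR in E; simpl in E; lra.
Qed.

Lemma renorm_data_width_lt : ~ (a = 1 /\ b = 2)%nat -> p + q + q < 1.
Proof.
  intros N12.
  pose proof (rd_p_ge0 D); pose proof (rd_width_gt0 D); pose proof (rd_a_ge1 D).
  pose proof renorm_data_q_gt0.
  destruct (Req_dec (p + q + q) 1) as [E|E]; [exfalso | pose proof renorm_data_width_le; lra].
  destruct (rd_shift_a D) as [ma Ea], (rd_shift_b D) as [mb Eb].
  destruct (Nat.lt_total b (a + a)) as [L|[L|L]].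
  - refine (rd_return_m D (rel_int_mid (- p) (rd_p_ge0 D)) (j := a + a - b) ltac:(lia) _).
    apply (in_arc_intro (z := - p + p / 2)); [lra|].
    rewrite minus_INR, plus_INR by lia.
    exists (1 + ma + ma - mb)%Z; rewrite !minus_IZR, !plus_IZR; simpl; lra.
  - destruct (@interval_avoiding_arc_lift 0 q (INR 1 * th) (- p) (p + q)) as [k [K1 K2]];
      [lra | lra | |].
    { intros x Hx; apply return_p_open; [lra | lia]. }
    refine (rd_return_m D (rel_int_mid (- p) (rd_p_ge0 D)) (j := a - 1) ltac:(lia) _).
    apply (in_arc_intro (z := - p + p / 2)); [lra|].
    rewrite minus_INR by lia.
    exists (ma + k)%Z; rewrite !plus_IZR; simpl in *; lra.
  - refine (return_p_open (x := q / 2) (j := a + a) ltac:(lra) ltac:(lia) _).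
    apply (in_arc_intro (z := q / 2 - p)); [lra|].
    rewrite plus_INR; exists (1 + ma + ma)%Z; rewrite !plus_IZR; simpl; lra.
Qed.

Lemma return_p_sub_a x : rel_int 0 q x ->
  forall j, (1 <= j < b - a)%nat -> ~ in_arc (- (p + q)) (p + q + q) (x + INR j * th).
Proof.
  intros Hx j Hj Hin.
  destruct (rel_int_elim renorm_data_q_gt0 Hx) as [z [Hz [m Em]]].
  destruct (in_arc_elim Hin) as [y [Hy [n En]]].
  destruct (Rle_dec (- p) y) as [Ly|Ly].
  - refine (return_p_open (x := z) (j := j) ltac:(lra) ltac:(lia) _).
    apply (in_arc_intro (z := y)); [lra|].
    exists (n - m)%Z; rewrite minus_IZR; lra.
  - refine (return_p_open (x := z) (j := j + a) ltac:(lra) ltac:(lia) _).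
    apply (in_arc_intro (z := y + q)); [pose proof (rd_p_ge0 D); lra|].
    destruct (rd_shift_a D) as [ma Ea].
    rewrite plus_INR; exists (n - m + ma)%Z; rewrite plus_IZR, minus_IZR; lra.
Qed.

(* The new [X_-] is [L^(b-a)(X_+)] followed by the old [X_-]; the point and its early return
   are perturbed off the ray [-p] between them, so that each lies in the interior of one
   piece and the old first-return properties apply. *)
Lemma return_m_sub_a x : rel_int (- (p + q)) (p + q) x ->
  forall j, (1 <= j < a)%nat -> ~ in_arc (- (p + q)) (p + q + q) (x + INR j * th).
Proof.
  intros Hx j Hj Hin.
  pose proof (rd_p_ge0 D); pose proof renorm_data_q_gt0.
  destruct (rel_int_elim (rd_width_gt0 D) Hx) as [z0 [Hz0 [m Em]]].
  destruct (in_arc_elim Hin) as [y0 [Hy0 [n En]]].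
  destruct (perturb_into (- p) Hz0 Hy0 ltac:(lra)) as [eps [Hz [Hy Hne]]].
  set (z := z0 + eps) in *; set (y := y0 + eps) in *.
  assert (Ezy : z + INR j * th - y = IZR (n - m)) by (unfold z, y; rewrite minus_IZR; lra).
  destruct (rd_shift_a D) as [ma Ea], (rd_shift_b D) as [mb Eb].
  destruct (Rlt_dec (- p) z) as [Lz|Lz]; destruct (Rle_dec (- p) y) as [Ly|Ly].
  - refine (rd_return_m D (x := z) _ Hj _).
    + apply (rel_int_intro (z := z)); [lra | lra | apply eqm1_refl].
    + apply (in_arc_intro (z := y)); [lra|]; exists (n - m)%Z; exact Ezy.
  - refine (return_p_open (x := y + p + q) (j := b - j) ltac:(lra) ltac:(lia) _).
    apply (in_arc_intro (z := z + q)); [lra|].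
    rewrite minus_INR by lia; exists (mb - (n - m))%Z; rewrite minus_IZR; lra.
  - refine (return_p_open (x := z + p + q) (j := b - a + j) ltac:(lra) ltac:(lia) _).
    apply (in_arc_intro (z := y)); [lra|].
    rewrite plus_INR, minus_INR by lia.
    exists (n - m + mb - ma)%Z; rewrite minus_IZR, plus_IZR; lra.
  - refine (return_p_open (x := z + p + q) (j := j) ltac:(lra) ltac:(lia) _).
    apply (in_arc_intro (z := y + p + q)); [lra|]; exists (n - m)%Z; lra.
Qed.

Lemma renorm_data_sub_a : ~ (a = 1 /\ b = 2)%nat -> renorm_data th (p + q) q a (b - a).
Proof.
  intros N12.
  pose proof (rd_p_ge0 D); pose proof (rd_q_ge0 D); pose proof (rd_width_gt0 D).
  pose proof (renorm_data_width_lt N12).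
  destruct (rd_shift_a D) as [ma Ea], (rd_shift_b D) as [mb Eb].
  constructor; try lra; try apply D; try lia.
  - intros E; assert (b = a + a)%nat by lia; subst b; rewrite plus_INR in Eb.
    assert (Hint : (0 < mb - ma - ma < 1)%Z) by (split; apply lt_IZR; rewrite !minus_IZR; simpl; lra).
    lia.
  - rewrite minus_INR by lia; exists (mb - ma)%Z; rewrite minus_IZR; lra.
  - exact return_m_sub_a.
  - exact return_p_sub_a.
Qed.

End ReductionLt.

Lemma renorm_data_p_gt0 th p q a b : renorm_data th p q a b -> (b < a)%nat -> 0 < p.
Proof. intros D L; exact (renorm_data_q_gt0 (renorm_data_opp D) L). Qed.

Lemma renorm_data_sub_b th p q a b : renorm_data th p q a b -> (b < a)%nat ->
  ~ (a = 2 /\ b = 1)%nat -> renorm_data th p (p + q) (a - b) b.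
Proof.
  intros D L N21.
  pose proof (renorm_data_opp (renorm_data_sub_a (renorm_data_opp D) L ltac:(tauto))) as D'.
  rewrite Ropp_involutive in D'; replace (p + q) with (q + p) by ring; exact D'.
Qed.

(** * Prime renormalizations and composition *)

Lemma renorm_data_12 th p q :
  renorm_data th p q 1 2 <-> 0 <= p /\ 0 < q /\ p + q + q = 1 /\ eqm1 th q.
Proof.
  split.
  - intros D; pose proof (rd_p_ge0 D); pose proof (rd_width_lt1 D).
    pose proof (renorm_data_q_gt0 D ltac:(lia)).
    destruct (rd_shift_a D) as [ma Ea], (rd_shift_b D) as [mb Eb]; simpl in Ea, Eb.
    assert (Hint : (0 < mb - ma - ma < 2)%Z)
      by (split; apply lt_IZR; rewrite !minus_IZR; simpl; lra).
    assert (E : (mb - ma - ma = 1)%Z) by lia.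
    apply (f_equal IZR) in E; rewrite !minus_IZR in E.
    repeat split; try lra; exists ma; simpl; lra.
  - intros (Hp & Hq & Hw & [m Hm]).
    constructor; simpl; try lra; [lia | lia | lia | | | intros x _ j Hj; lia |].
    + exists m; lra.
    + exists (m + m + 1)%Z; rewrite !plus_IZR; simpl; lra.
    + intros x Hx j Hj; assert (j = 1%nat) as -> by lia.
      destruct (rel_int_elim Hq Hx) as [z [Hz [k Hk]]].
      apply (not_in_arc (z := z + q)); [lra |].
      exists (k + m)%Z; rewrite plus_IZR; simpl; lra.
Qed.

Lemma renorm_data_21 th p q :
  renorm_data th p q 2 1 <-> 0 < p /\ 0 <= q /\ q + p + p = 1 /\ eqm1 th (- p).
Proof.
  split.
  - intros D; apply renorm_data_opp, renorm_data_12 in D as (Hq & Hp & Hw & [m Hm]).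
    repeat split; try lra; exists (- m)%Z; rewrite opp_IZR; lra.
  - intros (Hp & Hq & Hw & [m Hm]).
    rewrite <- (Ropp_involutive th); apply renorm_data_opp, renorm_data_12.
    repeat split; try lra; exists (- m)%Z; rewrite opp_IZR; lra.
Qed.

Lemma same_arc_of_eqm1 s w s' w' : eqm1 s s' -> w = w' -> same_arc s w (s', w').
Proof.
  intros [m Hm] <- x; simpl; split; intros [k Hk].
  - exists (k - m)%Z; rewrite minus_IZR; lra.
  - exists (k + m)%Z; rewrite plus_IZR; lra.
Qed.

Lemma is_prime_12 th p q mu : 0 <= p -> 0 < q -> p + q + q = 1 -> eqm1 th q ->
  eqm1 mu (q / (p + q)) -> is_prime th (mkSR p q 1 2) mu.
Proof.
  intros Hp Hq Hw Eth Hmu.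
  split; [apply sr_of_renorm_data; [apply renorm_data_12; auto | exact Hmu]|].
  exists q, (q - q, q), (q + q, 1 - 2 * q), 0; split.
  - unfold prime_config; rewrite (frac_part_eqm1 Eth ltac:(lra)).
    split; [lra|]; left; repeat split; lra.
  - left; simpl; split; [|split; [|split; reflexivity]]; apply same_arc_of_eqm1; try lra.
    + exists (-1)%Z; simpl; lra.
    + exists 0%Z; simpl; lra.
Qed.

Lemma is_prime_21 th p q mu : 0 < p -> 0 <= q -> q + p + p = 1 -> eqm1 th (- p) ->
  eqm1 mu (q / (p + q)) -> is_prime th (mkSR p q 2 1) mu.
Proof.
  intros Hp Hq Hw Eth Hmu.
  split; [apply sr_of_renorm_data; [apply renorm_data_21; auto | exact Hmu]|].
  assert (Eth' : eqm1 th (1 - p)) by (destruct Eth as [m Hm]; exists (m - 1)%Z;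
    rewrite minus_IZR; simpl; lra).
  exists (- p), (- p, 1 - (1 - p)), (- p + 1 - (1 - p), 2 * (1 - p) - 1), 0; split.
  - unfold prime_config; rewrite (frac_part_eqm1 Eth' ltac:(lra)).
    split; [lra|]; right; repeat split; lra.
  - right; simpl; split; [|split; [|split; reflexivity]]; apply same_arc_of_eqm1;
      try lra; exists 0%Z; simpl; lra.
Qed.

Lemma div_between lo hi x w : 0 < w -> lo * w <= x <= hi * w -> lo <= x / w <= hi.
Proof.
  intros Hw [H1 H2].
  assert (E : x / w * w = x) by (field; lra).
  split; apply (Rmult_le_reg_r w); lra.
Qed.

(* [S2] is placed with its common ray at [r = p1 / (p1 + q1)], the image under [psi1] of the
   common ray of [S1]; its lifted iterates then translate the lifted [X_-] and [X_+] by [q]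
   and [-p], as [L^a] and [L^b] do. *)
Lemma compose_intro th mu1 mu S1 S2 S :
  sector_renormalization th S1 mu1 -> sector_renormalization mu1 S2 mu ->
  sector_renormalization th S mu ->
  sr_p S = (sr_p S1 + sr_q S1) * sr_p S2 -> sr_q S = (sr_p S1 + sr_q S1) * sr_q S2 ->
  sr_p S <= sr_p S1 -> sr_q S <= sr_q S1 ->
  compose th S1 mu1 S2 mu S.
Proof.
  destruct S1 as [p1 q1 a1 b1], S2 as [p2 q2 a2 b2], S as [p q a b]; simpl.
  intros H1 H2 H Ep Eq Hp Hq.
  pose proof (rd_width_gt0 (proj1 (renorm_data_of_sr H1))) as Hw; simpl in Hw.
  destruct (renorm_data_of_sr H) as [D _], (renorm_data_of_sr H2) as [D2 _].
  pose proof (rd_p_ge0 D); pose proof (rd_q_ge0 D).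
  destruct (rd_shift_a D) as [ma Ea], (rd_shift_b D) as [mb Eb].
  destruct (rd_shift_a D2) as [na Na], (rd_shift_b D2) as [nb Nb].
  unfold compose; simpl; do 3 (split; [assumption|]).
  remember (p1 + q1) as w eqn:Ew; subst p q.
  assert (Er : w * (p1 / w) = p1) by (field; lra).
  exists (p1 / w); split; [apply div_between; lra|].
  split; [reflexivity|]; split; [reflexivity|]; split.
  - intros t Ht; exists ((p1 + w * q2 + t) / w); split; [apply div_between; lra|].
    assert (Es : w * ((p1 + w * q2 + t) / w) = p1 + w * q2 + t) by (field; lra).
    split.
    + exists (- na)%Z; rewrite opp_IZR; unfold Lit.
      replace ((p1 + w * q2 + t) / w) with (p1 / w + t / w + q2) by (field; lra); lra.
    + exists ma; unfold Lit; rewrite Er, Es; lra.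
  - intros t Ht; exists ((p1 - w * p2 + t) / w); split; [apply div_between; lra|].
    assert (Es : w * ((p1 - w * p2 + t) / w) = p1 - w * p2 + t) by (field; lra).
    split.
    + exists (- nb)%Z; rewrite opp_IZR; unfold Lit.
      replace ((p1 - w * p2 + t) / w) with (p1 / w + t / w - p2) by (field; lra); lra.
    + exists mb; unfold Lit; rewrite Er, Es; lra.
Qed.

Lemma prime_iteration_sub_a th p q a b mu :
  renorm_data th p q a b -> (a < b)%nat -> ~ (a = 1 /\ b = 2)%nat -> eqm1 mu (q / (p + q)) ->
  prime_iteration th (mkSR (p + q) q a (b - a)) (q / (p + q + q)) ->
  prime_iteration th (mkSR p q a b) mu.
Proof.
  intros D L N12 Hmu IH.
  pose proof (rd_p_ge0 D); pose proof (renorm_data_q_gt0 D L).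
  pose proof (renorm_data_width_lt D L N12).
  assert (P : is_prime (q / (p + q + q)) (mkSR (p / (p + q + q)) (q / (p + q + q)) 1 2) mu).
  { apply is_prime_12.
    - apply (@div_between 0 1); lra.
    - apply Rdiv_lt_0_compat; lra.
    - field; lra.
    - apply eqm1_refl.
    - replace (q / (p + q + q) / (p / (p + q + q) + q / (p + q + q))) with (q / (p + q))
        by (field; lra); exact Hmu. }
  eapply pi_step; [exact IH | exact P |].
  apply compose_intro; simpl; try (field; lra); try lra.
  - apply sr_of_renorm_data; [exact (renorm_data_sub_a D L N12) | apply eqm1_refl].
  - exact (proj1 P).
  - apply sr_of_renorm_data; assumption.
Qed.

Lemma prime_iteration_sub_b th p q a b mu :
  renorm_data th p q a b -> (b < a)%nat -> ~ (a = 2 /\ b = 1)%nat -> eqm1 mu (q / (p + q)) ->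
  prime_iteration th (mkSR p (p + q) (a - b) b) ((p + q) / (p + (p + q))) ->
  prime_iteration th (mkSR p q a b) mu.
Proof.
  intros D L N21 Hmu IH.
  pose proof (rd_q_ge0 D); pose proof (renorm_data_p_gt0 D L).
  pose proof (rd_width_lt1 (renorm_data_sub_b D L N21)).
  assert (P : is_prime ((p + q) / (p + (p + q)))
                (mkSR (p / (p + (p + q))) (q / (p + (p + q))) 2 1) mu).
  { apply is_prime_21.
    - apply Rdiv_lt_0_compat; lra.
    - apply (@div_between 0 1); lra.
    - field; lra.
    - exists 1%Z; simpl; field; lra.
    - replace (q / (p + (p + q)) / (p / (p + (p + q)) + q / (p + (p + q)))) with (q / (p + q))
        by (field; lra); exact Hmu. }
  eapply pi_step; [exact IH | exact P |].
  apply compose_intro; simpl; try (field; lra); try lra.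
  - apply sr_of_renorm_data; [exact (renorm_data_sub_b D L N21) | apply eqm1_refl].
  - exact (proj1 P).
  - apply sr_of_renorm_data; assumption.
Qed.

Lemma prime_iteration_of_renorm_data n : forall th p q a b mu, (a + b <= n)%nat ->
  renorm_data th p q a b -> eqm1 mu (q / (p + q)) -> prime_iteration th (mkSR p q a b) mu.
Proof.
  induction n as [|n IH]; intros th p q a b mu Hn D Hmu.
  { pose proof (rd_a_ge1 D); lia. }
  pose proof (rd_a_ge1 D); pose proof (rd_b_ge1 D).
  destruct (Nat.lt_gt_cases a b) as [[L|L] _]; [exact (rd_a_neq_b D) | |].
  - assert (Hdec : (a = 1 /\ b = 2)%nat \/ ~ (a = 1 /\ b = 2)%nat) by lia.
    destruct Hdec as [[-> ->]|N12].
    + apply renorm_data_12 in D as (Hp & Hq & Hw & Eth).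
      apply pi_one, is_prime_12; assumption.
    + apply (prime_iteration_sub_a D L N12 Hmu), IH; [lia | | apply eqm1_refl].
      exact (renorm_data_sub_a D L N12).
  - assert (Hdec : (a = 2 /\ b = 1)%nat \/ ~ (a = 2 /\ b = 1)%nat) by lia.
    destruct Hdec as [[-> ->]|N21].
    + apply renorm_data_21 in D as (Hp & Hq & Hw & Eth).
      apply pi_one, is_prime_21; assumption.
    + apply (prime_iteration_sub_b D L N21 Hmu), IH; [lia | | apply eqm1_refl].
      exact (renorm_data_sub_b D L N21).
Qed.

Theorem lemmaA2 : forall (theta mu : R) (S : SR),
  sector_renormalization theta S mu -> prime_iteration theta S mu.
Proof.
  intros theta mu [p q a b] H.
  destruct (renorm_data_of_sr H) as [D Hmu].
  exact (prime_iteration_of_renorm_data (le_n _) D Hmu).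
Qed.
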